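(* Let $c\in(0,1)$ and $C\ge1$ be constants such that for all $n\ge1$, all integers $0\le w\le cn$ and all integers $0\le i\le n/2$, $|K^{(n)}_w(i)|\le C\binom nw(1-\frac{2w}{n})^i$. Let $\mathcal{C}\subseteq\mathbb{F}_2^n$ be a binary linear $[n,k]$ code with $1\le k\le n-1$, generator matrix $G\in\mathbb{F}_2^{k\times n}$ (of rank $k$), and dual distance $d^\perp$; put $t^\perp=\lfloor(d^\perp-1)/2\rfloor$. Let $w$ be a nonnegative integer with $w\le cn$, let $\varepsilon>0$, and let $Z$ be a random vector on $\mathbb{F}_2^n$ with $d_{TV}(P_{GZ},P_{U_k})\le\varepsilon$. Then there exists $e\in\mathbb{F}_2^n$ with $|e|=w$ such that $$|\mathrm{bias}(e^\intercal Z)|\le\sqrt{\frac{|\mathcal{C}^\perp|V_n(t^\perp)}{2^{n+1}}}+\frac{\sqrt{Cn}}{2}\left(1-\frac{2w}{n}\right)^{t^\perp/2}+\sqrt{\frac\varepsilon2}.$$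
   Context: Krawtchouk polynomial: $K^{(n)}_w(i)=\sum_{j=0}^w(-1)^j\binom ij\binom{n-i}{w-j}$. The dual distance $d^\perp$ is the minimum Hamming weight of a nonzero vector of $\mathcal{C}^\perp$. $V_n(t)=\sum_{j=0}^t\binom nj$. For a $\{0,1\}$-valued random variable $\xi$, $\mathrm{bias}(\xi)=\frac12-\Pr(\xi=1)=\frac{\Pr(\xi=0)-\Pr(\xi=1)}{2}$. $P_{GZ}$ is the distribution of $GZ\in\mathbb{F}_2^k$, $P_{U_k}$ the uniform distribution on $\mathbb{F}_2^k$, and $d_{TV}(P,Q)=\frac12\sum_x|P(x)-Q(x)|$. $|e|$ denotes Hamming weight. *)

From HB Require Import structures.
From mathcomp Require Import all_boot all_order all_algebra.
From mathcomp Require Import all_classical all_reals all_analysis.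
Set Implicit Arguments. Unset Strict Implicit. Unset Printing Implicit Defensive.
Import Order.TTheory GRing.Theory Num.Theory.
Local Open Scope ring_scope.

Definition krawtchouk (R : ringType) (n w i : nat) : R :=
  \sum_(j < w.+1) (-1) ^+ j * ('C(i, j) * 'C(n - i, w - j))%:R.

Definition hweight (n : nat) (x : 'cV['F_2]_n) : nat := #|[set i | x i ord0 != 0]|.

Definition hball_vol (n t : nat) : nat := \sum_(j < t.+1) 'C(n, j).

(* The code C is the row space of G : 'M_(k,n) (codewords m G); its dual is
   C^perp = { y | G y = 0 } (y as a column vector). *)
Definition dual_code (k n : nat) (G : 'M['F_2]_(k, n)) : {set 'cV['F_2]_n} :=
  [set y | G *m y == 0].

(* Dual distance: minimum weight of a nonzero vector of C^perp
   (default value n if C^perp = 0, which cannot happen when rank G < n). *)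
Definition dual_distance (k n : nat) (G : 'M['F_2]_(k, n)) : nat :=
  \big[minn/n]_(y in dual_code G | y != 0) hweight y.

Definition is_pmf (R : numDomainType) (T : finType) (P : T -> R) : Prop :=
  (forall x, 0 <= P x) /\ \sum_x P x = 1.

Definition pushGZ (R : ringType) (k n : nat) (G : 'M['F_2]_(k, n))
  (P : 'cV['F_2]_n -> R) (x : 'cV['F_2]_k) : R :=
  \sum_(z | G *m z == x) P z.

Definition dTV_uniform (R : numFieldType) (k n : nat) (G : 'M['F_2]_(k, n))
  (P : 'cV['F_2]_n -> R) : R :=
  2^-1 * \sum_(x : 'cV['F_2]_k) `|pushGZ G P x - (2 ^+ k)^-1|.

Definition bias_lin (R : numFieldType) (n : nat) (P : 'cV['F_2]_n -> R)
  (e : 'cV['F_2]_n) : R :=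
  2^-1 - \sum_(z | (e^T *m z) ord0 ord0 == 1) P z.

From HB Require Import structures.
From mathcomp Require Import all_boot all_order all_algebra.
From mathcomp Require Import all_classical all_reals all_analysis.
From mathcomp Require Import zify ring lra.
Import Order.TTheory GRing.Theory Num.Theory.
Local Open Scope ring_scope.
Set Implicit Arguments. Unset Strict Implicit. Unset Printing Implicit Defensive.

(* Write f(e) = E[(-1)^(e.Z)], so that bias(e.Z) = f(e)/2.  Averaging f(e)^2 over
   the vectors e of weight w gives E[K_w(|Z + Z'|)] for an independent copy Z' of Z,
   since the character sum of weight w at x is the Krawtchouk value K_w(|x|).
   Split according to x = Z + Z':
   - if |x| <= t or |x + 1| <= t, use |K_w| <= C(n,w); since G maps a Hamming ball
     of radius t onto at most V_n(t) points, such x have probability at most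
     2 (V_n(t)/2^k + eps);
   - otherwise min(|x|, n - |x|) > t, and the hypothesis on K_w together with the
     symmetry K_w(n - i) = (-1)^w K_w(i) gives |K_w(x)| <= C C(n,w) (1 - 2w/n)^t.
   Some e of weight w is at most the average, and 2^k |C^perp| >= 2^n. *)

Lemma exists_le_avg (R : realDomainType) (T : finType) (Q : pred T) (F : T -> R) M :
  0 < \sum_(x | Q x) (1 : R) -> \sum_(x | Q x) F x <= (\sum_(x | Q x) (1 : R)) * M ->
  exists2 x, Q x & F x <= M.
Proof.
move=> Qpos FM; case: (pickP (fun x => Q x && (F x <= M))) => [x /andP[] | none].
  by exists x.
have QT : has Q (index_enum T).
  case: (pickP Q) => [x Qx | Q0]; first by apply/hasP; exists x; rewrite ?mem_index_enum.
  by move: Qpos; rewrite big_pred0 ?ltxx.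
suff : \sum_(x | Q x) 1 * M < \sum_(x | Q x) F x by rewrite -mulr_suml ltNge FM.
by apply: ltr_sum => // x Qx; move: (none x); rewrite Qx mul1r => /negbT; rewrite -ltNge.
Qed.

Lemma sumr_mul_natb (R : nzRingType) (T : finType) (F : T -> R) (Q : pred T) :
  \sum_x F x * (Q x)%:R = \sum_(x | Q x) F x.
Proof. by rewrite [RHS]big_mkcond; apply: eq_bigr => x _; case: (Q x); rewrite ?mulr1 ?mulr0. Qed.

Lemma sum_le_sum_add_half_dist (R : realFieldType) (T : finType) (f g : T -> R) (X : {set T}) :
  \sum_x f x = \sum_x g x ->
  \sum_(x in X) f x <= \sum_(x in X) g x + 2^-1 * \sum_x `|f x - g x|.
Proof.
move=> fg; set pos := fun x => (`|f x - g x| + (f x - g x)) / 2.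
have pos_ge0 x : 0 <= pos x.
  by rewrite divr_ge0 // -lerBlDr sub0r -normrN ler_norm.
have sum_pos : \sum_x pos x = 2^-1 * \sum_x `|f x - g x|.
  by rewrite -mulr_suml big_split /= sumrB fg subrr addr0 mulrC.
rewrite -sum_pos -lerBlDl -sumrB (bigID (mem X) xpredT) /= -[leLHS]addr0.
apply: lerD; last by rewrite sumr_ge0.
apply: ler_sum => x _; rewrite ler_pdivlMr // mulr_natr mulr2n lerD2r; exact: ler_norm.
Qed.

Lemma normr_le_add3 (R : realFieldType) (x a b c : R) : 0 <= a -> 0 <= b -> 0 <= c ->
  x ^+ 2 <= a ^+ 2 + b ^+ 2 + c ^+ 2 -> `|x| <= a + b + c.
Proof.
move=> a0 b0 c0 hx; rewrite -(@ler_pXn2r _ 2) ?nnegrE ?addr_ge0 // real_normK ?num_real //.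
apply: le_trans hx _; nra.
Qed.

Lemma sqr_powR_half (R : realType) (b : R) t : 0 <= b -> (b `^ (t%:R / 2)) ^+ 2 = b ^+ t.
Proof.
by move=> b0; rewrite powRrM powR_mulrn // powR12_sqrt ?exprn_ge0 // sqr_sqrtr ?exprn_ge0.
Qed.

Lemma F2_0or1 (a : 'F_2) : a = 0 \/ a = 1.
Proof. by case: a => [[|[|m]] //= lt_a]; [left | right]; apply/val_inj. Qed.

Lemma F2_add11 : 1 + 1 = 0 :> 'F_2.
Proof. exact: val_inj. Qed.

Definition chi (R : nzRingType) (b : 'F_2) : R := if b == 0 then 1 else -1.

Section Character.
Variable R : nzRingType.

Lemma chiD a b : chi R (a + b) = chi R a * chi R b.
Proof.
by case: (F2_0or1 a) => ->; case: (F2_0or1 b) => ->;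
  rewrite /chi ?F2_add11 ?add0r ?addr0 ?eqxx ?oner_eq0 ?mulrNN ?mulr1 ?mul1r.
Qed.

Lemma chi_natr m : chi R m%:R = (-1) ^+ m.
Proof.
elim: m => [|m IHm]; first by rewrite /chi eqxx.
by rewrite -[m.+1]add1n natrD chiD IHm exprS /chi oner_eq0.
Qed.

Lemma chiE b : chi R b = 1 - 2 * (b == 1)%:R.
Proof.
case: (F2_0or1 b) => ->; rewrite /chi ?eqxx ?oner_eq0 /=; first by rewrite mulr0 subr0.
by rewrite mulr1 opprD addrA subrr add0r.
Qed.

End Character.

Definition dotv n (e x : 'cV['F_2]_n) : 'F_2 := (e^T *m x) ord0 ord0.

Lemma dotvDr n (e x y : 'cV['F_2]_n) : dotv e (x + y) = dotv e x + dotv e y.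
Proof. by rewrite /dotv mulmxDr mxE. Qed.

Definition supp n (e : 'cV['F_2]_n) : {set 'I_n} := [set i | e i ord0 != 0].

Definition indv n (A : {set 'I_n}) : 'cV['F_2]_n := \col_i (i \in A)%:R.

Definition onesv n : 'cV['F_2]_n := indv [set: 'I_n].

Lemma hweightE n (e : 'cV['F_2]_n) : hweight e = #|supp e|.
Proof. by []. Qed.

Lemma indvK n : cancel (@supp n) (@indv n).
Proof.
move=> e; apply/matrixP => i j; rewrite !mxE inE (ord1 j).
by case: (F2_0or1 (e i ord0)) => ->; rewrite ?eqxx ?oner_eq0.
Qed.

Lemma suppK n : cancel (@indv n) (@supp n).
Proof.
by move=> A; apply/setP => i; rewrite !inE mxE; case: (i \in A); rewrite ?eqxx ?oner_eq0.
Qed.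

Lemma dotv_indv n (A S : {set 'I_n}) : dotv (indv A) (indv S) = #|A :&: S|%:R.
Proof.
rewrite /dotv mxE (bigID (mem (A :&: S))) /= [X in _ + X]big1 ?addr0.
  rewrite -sum1_card natr_sum; apply: eq_bigr => i.
  by rewrite !mxE inE => /andP[-> ->]; rewrite mulr1.
move=> i; rewrite !mxE inE negb_and.
by case: (i \in A); case: (i \in S); rewrite //= ?mulr0 ?mul0r.
Qed.

Lemma hweight_addv_ones n (x : 'cV['F_2]_n) : hweight (x + onesv n) = (n - hweight x)%N.
Proof.
rewrite !hweightE; have -> : supp (x + onesv n) = ~: supp x.
  apply/setP => i; rewrite !inE !mxE inE.
  by case: (F2_0or1 (x i ord0)) => ->; rewrite ?add0r ?F2_add11 ?eqxx ?oner_eq0.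
by have := cardsC (supp x); rewrite card_ord; lia.
Qed.

Lemma sum_hweight_eq (R : nzRingType) n w (F : 'cV['F_2]_n -> R) :
  \sum_(e | hweight e == w) F e = \sum_(A : {set 'I_n} | #|A| == w) F (indv A).
Proof.
rewrite (reindex (@indv n)) /=; last by exists (@supp n) => e _; rewrite ?indvK ?suppK.
by apply: eq_bigl => A; rewrite hweightE suppK.
Qed.

Lemma sum1_hweight_eq (R : nzRingType) n w :
  \sum_(e : 'cV['F_2]_n | hweight e == w) (1 : R) = 'C(n, w)%:R.
Proof.
rewrite sum_hweight_eq sumr_const -[n in 'C(n, _)]card_ord -card_draws.
by congr (_ *+ _); apply: eq_card => A; rewrite !inE.
Qed.

Lemma sum1_hweight_le (R : nzRingType) n t :
  \sum_(x : 'cV['F_2]_n | (hweight x <= t)%N) (1 : R) = (hball_vol n t)%:R.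
Proof.
rewrite /hball_vol natr_sum.
rewrite (partition_big (fun x : 'cV['F_2]_n => (inord (hweight x) : 'I_t.+1)) xpredT) //=.
apply: eq_bigr => j _; rewrite -sum1_hweight_eq; apply: eq_bigl => x.
case: (leqP (hweight x) t) => h /=.
  by apply/eqP/eqP => [<- | ej]; [rewrite inordK | apply/val_inj; rewrite /= inordK].
by apply/esym/eqP => ej; move: (ltn_ord j); rewrite -ej; lia.
Qed.

Section CountBySetI.
Variables (T : finType) (S : {set T}).

Lemma setIU_setD_disjoint (B1 B2 : {set T}) :
  B1 \subset S -> B2 \subset ~: S -> (B1 :|: B2) :&: S = B1 /\ (B1 :|: B2) :\: S = B2.
Proof.
move=> /fintype.subsetP s1 /fintype.subsetP s2; split; apply/setP => x; rewrite !inE;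
have := s1 x; have := s2 x; rewrite inE;
case: (x \in S); case: (x \in B1); case: (x \in B2) => //= h1 h2;
by [have := h1 isT | have := h2 isT].
Qed.

Lemma card_sets_meeting w j : (j <= w)%N ->
  #|[set A : {set T} | (#|A| == w) && (#|A :&: S| == j)]| =
  ('C(#|S|, j) * 'C(#|~: S|, w - j))%N.
Proof.
move=> jw.
set D1 := [set B : {set T} | B \subset S & #|B| == j].
set D2 := [set B : {set T} | B \subset ~: S & #|B| == (w - j)%N].
have -> : [set A : {set T} | (#|A| == w) && (#|A :&: S| == j)] =
    (fun p : {set T} * {set T} => p.1 :|: p.2) @: finset.setX D1 D2.
  apply/setP => A; rewrite inE; apply/idP/imsetP.
    move=> /andP[/eqP hA /eqP hj]; exists (A :&: S, A :\: S) => /=.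
      rewrite !inE finset.subsetIr hj eqxx /=.
      apply/andP; split; first by apply/fintype.subsetP => x; rewrite !inE => /andP[].
      by rewrite -hA -(cardsID S A) hj addKn.
    by rewrite finset.setDE -finset.setIUr finset.setUCr finset.setIT.
  case=> [[B1 B2]]; rewrite !inE /= => /andP[/andP[s1 /eqP c1] /andP[s2 /eqP c2]] ->.
  have [-> _] := setIU_setD_disjoint s1 s2; rewrite c1 eqxx andbT cardsU c1 c2.
  have /finset.disjoint_setI0 -> : [disjoint B1 & B2].
    by apply: disjointWl s1 _; rewrite disjoint_sym finset.disjoints_subset.
  by rewrite subnKC // cards0 subn0.
rewrite card_in_imset ?cardsX ?cards_draws //.
move=> [B1 B2] [B1' B2']; rewrite !inE /= =>
  /andP[/andP[s1 _] /andP[s2 _]] /andP[/andP[s1' _] /andP[s2' _]] e.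
have [e1 e2] := setIU_setD_disjoint s1 s2; have [e1' e2'] := setIU_setD_disjoint s1' s2'.
by have := congr1 (fun X => (X :&: S, X :\: S)) e; rewrite /= e1 e2 e1' e2'.
Qed.

Lemma sum_sign_card_setI (R : nzRingType) w :
  \sum_(A : {set T} | #|A| == w) (-1) ^+ #|A :&: S| =
  \sum_(j < w.+1) (-1) ^+ j * ('C(#|S|, j) * 'C(#|T| - #|S|, w - j))%:R :> R.
Proof.
rewrite -(cardsC S) addKn.
rewrite (partition_big (fun A : {set T} => (inord #|A :&: S| : 'I_w.+1)) xpredT) //=.
apply: eq_bigr => j _.
rewrite -(card_sets_meeting (ltnSE (ltn_ord j))) mulr_natr -sumr_const.
have leAw (A : {set T}) : #|A| = w -> (#|A :&: S| < w.+1)%N.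
  by move=> <-; rewrite ltnS subset_leq_card // finset.subsetIl.
apply: eq_big => A; rewrite ?inE; last by move=> /andP[/eqP /leAw ? /eqP <-]; rewrite inordK.
case: (#|A| =P w) => //= /leAw hA.
by apply/eqP/eqP => [<- | ej]; [rewrite inordK | apply/val_inj; rewrite /= inordK].
Qed.

End CountBySetI.

Definition kraw_char (R : nzRingType) n w (x : 'cV['F_2]_n) : R :=
  \sum_(e : 'cV['F_2]_n | hweight e == w) chi R (dotv e x).

Lemma kraw_charE (R : nzRingType) n w (x : 'cV['F_2]_n) :
  kraw_char R w x = krawtchouk R n w (hweight x).
Proof.
rewrite /kraw_char sum_hweight_eq hweightE.
rewrite (eq_bigr (fun A => (-1) ^+ #|A :&: supp x|)); last first.
  by move=> A _; rewrite -{1}[x]indvK dotv_indv chi_natr.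
by rewrite sum_sign_card_setI card_ord.
Qed.

Lemma kraw_char_addv_ones (R : comNzRingType) n w (x : 'cV['F_2]_n) :
  kraw_char R w (x + onesv n) = (-1) ^+ w * kraw_char R w x.
Proof.
rewrite /kraw_char mulr_sumr; apply: eq_bigr => e /eqP hw.
rewrite dotvDr chiD mulrC; congr (_ * _).
by rewrite /onesv -[e]indvK dotv_indv finset.setIT chi_natr -hweightE hw.
Qed.

Lemma normr_kraw_char_le (R : numDomainType) n w (x : 'cV['F_2]_n) :
  `|kraw_char R w x| <= 'C(n, w)%:R.
Proof.
rewrite -sum1_hweight_eq; apply: le_trans (ler_norm_sum _ _ _) _.
by apply: ler_sum => e _; rewrite /chi; case: ifP; rewrite ?normrN normr1.
Qed.

Lemma normr_kraw_char_tail (R : numDomainType) (C b : R) n w t (x : 'cV['F_2]_n) :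
  0 <= C -> 0 <= b -> b <= 1 ->
  (forall i, (i * 2 <= n)%N -> `|krawtchouk R n w i| <= C * 'C(n, w)%:R * b ^+ i) ->
  `|kraw_char R w x| <= 'C(n, w)%:R *
     ((hweight x <= t)%N%:R + (hweight (x + onesv n) <= t)%N%:R + C * b ^+ t).
Proof.
move=> C0 b0 b1 hK.
have Cbt : 0 <= C * b ^+ t by rewrite mulr_ge0 ?exprn_ge0.
have expr_antitone i : (t < i)%N -> b ^+ i <= b ^+ t.
  move=> /ltnW ti; rewrite -(subnKC ti) exprD.
  by rewrite ler_piMr ?exprn_ge0 ?exprn_ile1.
case: (leqP (hweight x) t) => h1.
  apply: le_trans (normr_kraw_char_le R w x) _; rewrite ler_peMr //.
  by rewrite -addrA lerDl addr_ge0.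
case: (leqP (hweight (x + onesv n)) t) => h2.
  apply: le_trans (normr_kraw_char_le R w x) _; rewrite ler_peMr //.
  by rewrite add0r lerDl.
rewrite !add0r mulrCA mulrA.
case: (leqP (hweight x * 2) n) => h3.
  rewrite kraw_charE; apply: le_trans (hK _ h3) _.
  by rewrite ler_wpM2l ?mulr_ge0 ?expr_antitone.
have -> : `|kraw_char R w x| = `|kraw_char R w (x + onesv n)|.
  by rewrite kraw_char_addv_ones normrM normrX normrN normr1 expr1n mul1r.
have h4 := hweight_addv_ones x.
rewrite kraw_charE; apply: le_trans (hK _ _) _; first by rewrite h4; lia.
by rewrite ler_wpM2l ?mulr_ge0 ?expr_antitone.
Qed.

Lemma card_cV_F2 k : #|{: 'cV['F_2]_k}| = (2 ^ k)%N.
Proof. by rewrite card_mx card_Fp // muln1. Qed.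

Lemma card_hball_translate_le n t (a : 'cV['F_2]_n) :
  (#|[set y : 'cV['F_2]_n | (hweight (a + y) <= t)%N]| <= hball_vol n t)%N.
Proof.
have -> : [set y : 'cV['F_2]_n | (hweight (a + y) <= t)%N] =
    (fun x => x - a) @: [set x : 'cV['F_2]_n | (hweight x <= t)%N].
  apply/setP => y; rewrite inE; apply/idP/imsetP => [h | [x]].
    by exists (a + y); rewrite ?inE // addrC addKr.
  by rewrite inE => h ->; rewrite addrC subrK.
apply: leq_trans (leq_imset_card _ _) _.
rewrite -(ler_nat int) -sum1_hweight_le -sum1_card natr_sum.
by under eq_bigl do rewrite inE.
Qed.

Lemma sum_pushGZ (R : numDomainType) k n (G : 'M['F_2]_(k, n)) (P : 'cV['F_2]_n -> R) :
  is_pmf P -> \sum_x pushGZ G P x = 1.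
Proof. by case=> _ <-; rewrite (partition_big (fun z => G *m z) xpredT). Qed.

Lemma prob_hball_le (R : realFieldType) k n (G : 'M['F_2]_(k, n)) (P : 'cV['F_2]_n -> R)
    eps t (a : 'cV['F_2]_n) :
  is_pmf P -> dTV_uniform G P <= eps ->
  \sum_(y | (hweight (a + y) <= t)%N) P y <= (hball_vol n t)%:R / 2 ^+ k + eps.
Proof.
move=> hP hTV; set B := [set y | (hweight (a + y) <= t)%N]; set X := (fun y => G *m y) @: B.
have -> : \sum_(y | (hweight (a + y) <= t)%N) P y = \sum_(y in B) P y.
  by apply: eq_bigl => y; rewrite inE.
rewrite (partition_big_imset (fun y => G *m y)) /= -/X.
have sum_fibre_le x : \sum_(y in B | G *m y == x) P y <= pushGZ G P x.
  rewrite /pushGZ [leLHS]big_mkcond [leRHS]big_mkcond /=.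
  by apply: ler_sum => y _; case: (y \in B); case: (_ == x); rewrite ?(hP.1).
apply: le_trans (ler_sum _ (fun x _ => sum_fibre_le x)) _.
have sum_unif : \sum_(x : 'cV['F_2]_k) (2 ^+ k)^-1 = 1 :> R.
  by rewrite sumr_const card_cV_F2 -[_ *+ _]mulr_natl natrX mulfV // expf_neq0.
apply: le_trans (sum_le_sum_add_half_dist (f := pushGZ G P) (g := fun=> (2 ^+ k)^-1) X _) _.
  by rewrite sum_pushGZ // sum_unif.
apply: lerD; last exact: hTV.
rewrite sumr_const -[_ *+ _]mulr_natl ler_wpM2r ?invr_ge0 ?exprn_ge0 // ler_nat.
exact: leq_trans (leq_imset_card _ _) (card_hball_translate_le _ _).
Qed.

Lemma card_dual_code_ge k n (G : 'M['F_2]_(k, n)) : (2 ^ n <= #|dual_code G| * 2 ^ k)%N.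
Proof.
have fibres : #|{: 'cV['F_2]_n}| = (\sum_(x : 'cV['F_2]_k) #|[pred z | G *m z == x]|)%N.
  rewrite -sum1_card (partition_big (fun z => G *m z) xpredT) //=.
  by apply: eq_bigr => x _; rewrite sum1_card.
have -> : (#|dual_code G| * 2 ^ k = \sum_(x : 'cV['F_2]_k) #|dual_code G|)%N.
  by rewrite sum_nat_const card_cV_F2 mulnC.
rewrite -card_cV_F2 fibres; apply: leq_sum => x _.
case: (pickP (fun z => G *m z == x)) => [z0 /eqP Gz0 | none]; last first.
  by rewrite (@eq_card0 _ [pred z | G *m z == x]).
rewrite -(card_imset _ (addIr (- z0))).
apply/subset_leq_card/fintype.subsetP => _ /imsetP[z /eqP Gz ->].
by rewrite inE mulmxBr Gz Gz0 subrr.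
Qed.

Definition fcoef (R : nzRingType) n (P : 'cV['F_2]_n -> R) (e : 'cV['F_2]_n) : R :=
  \sum_z P z * chi R (dotv e z).

Lemma bias_linE (R : numFieldType) n (P : 'cV['F_2]_n -> R) e :
  is_pmf P -> bias_lin P e = fcoef P e / 2.
Proof.
case=> _ P1; rewrite /bias_lin /fcoef.
have -> : \sum_z P z * chi R (dotv e z) = \sum_z P z - 2 * \sum_(z | dotv e z == 1) P z.
  rewrite mulr_sumr [X in _ - X]big_mkcond -sumrB; apply: eq_bigr => z _.
  by rewrite chiE mulrBr mulr1 /dotv; case: (_ == 1); rewrite /= ?mulr1 ?mulr0 ?mul0r // mulrC.
by rewrite P1 mulrBl mul1r mulrAC divff ?mul1r // pnatr_eq0.
Qed.

Lemma normr_bias_lin_le (R : realFieldType) n (P : 'cV['F_2]_n -> R) e :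
  is_pmf P -> `|bias_lin P e| <= 2^-1.
Proof.
case=> P0 P1; rewrite /bias_lin; set S := (X in 2^-1 - X).
have S0 : 0 <= S by rewrite sumr_ge0.
have S1 : S <= 1.
  by rewrite -P1 [leRHS](bigID (fun z => (e^T *m z) ord0 ord0 == 1)) /= lerDl sumr_ge0.
by rewrite ler_norml; apply/andP; split; lra.
Qed.

Lemma sum_fcoef_sqr (R : comNzRingType) n w (P : 'cV['F_2]_n -> R) :
  \sum_(e | hweight e == w) fcoef P e ^+ 2 =
  \sum_z \sum_z' P z * P z' * kraw_char R w (z + z').
Proof.
transitivity (\sum_(e | hweight e == w) \sum_z \sum_z' P z * P z' * chi R (dotv e (z + z'))).
  apply: eq_bigr => e _; rewrite expr2 /fcoef mulr_suml; apply: eq_bigr => z _.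
  rewrite mulr_sumr; apply: eq_bigr => z' _.
  by rewrite dotvDr chiD -!mulrA; congr (_ * _); rewrite mulrCA.
rewrite exchange_big; apply: eq_bigr => z _; rewrite exchange_big; apply: eq_bigr => z' _.
by rewrite /kraw_char mulr_sumr.
Qed.

Lemma exists_hweight n w : (w <= n)%N -> exists e : 'cV['F_2]_n, hweight e = w.
Proof.
move=> wn; case: (pickP (fun e : 'cV['F_2]_n => hweight e == w)) => [e /eqP | none].
  by exists e.
have := sum1_hweight_eq int n w; rewrite big_pred0 // => /esym/eqP.
by rewrite pnatr_eq0 eqn0Ngt bin_gt0 wn.
Qed.

Section KrawtchoukAverage.
Variables (R : realFieldType) (C b eps : R) (n k : nat) (G : 'M['F_2]_(k, n)).
Variables (P : 'cV['F_2]_n -> R) (w t : nat).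
Hypotheses (C0 : 0 <= C) (b0 : 0 <= b) (b1 : b <= 1).
Hypotheses (hP : is_pmf P) (hTV : dTV_uniform G P <= eps).
Hypothesis hK : forall i, (i * 2 <= n)%N -> `|krawtchouk R n w i| <= C * 'C(n, w)%:R * b ^+ i.

Let M := 2 * ((hball_vol n t)%:R / 2 ^+ k + eps) + C * b ^+ t.

Lemma sum_normr_kraw_char_le z :
  \sum_z' P z' * `|kraw_char R w (z + z')| <= 'C(n, w)%:R * M.
Proof.
have [P0 P1] := hP.
apply: le_trans (ler_sum _ (fun z' _ =>
  ler_wpM2l (P0 z') (normr_kraw_char_tail t (z + z') C0 b0 b1 hK))) _.
under eq_bigr do rewrite mulrCA; rewrite -mulr_sumr ler_wpM2l //.
under eq_bigr do rewrite !mulrDr; rewrite !big_split /= -mulr_suml P1 mul1r !sumr_mul_natb.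
have -> : \sum_(y | (hweight (z + y + onesv n) <= t)%N) P y =
          \sum_(y | (hweight (z + onesv n + y) <= t)%N) P y.
  by apply: eq_bigl => y; rewrite addrAC.
have := prob_hball_le t z hP hTV; have := prob_hball_le t (z + onesv n) hP hTV.
rewrite /M; lra.
Qed.

Lemma sum_fcoef_sqr_le :
  \sum_(e | hweight e == w) fcoef P e ^+ 2 <= (\sum_(e : 'cV['F_2]_n | hweight e == w) (1 : R)) * M.
Proof.
have [P0 P1] := hP; rewrite sum_fcoef_sqr sum1_hweight_eq.
apply: le_trans (_ : \sum_z P z * ('C(n, w)%:R * M) <= _); last by rewrite -mulr_suml P1 mul1r.
apply: ler_sum => z _.
apply: le_trans (_ : \sum_z' P z * (P z' * `|kraw_char R w (z + z')|) <= _).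
  by apply: ler_sum => z' _; rewrite -mulrA; do 2 apply: ler_wpM2l => //; apply: ler_norm.
by rewrite -mulr_sumr ler_wpM2l // sum_normr_kraw_char_le.
Qed.

Lemma exists_bias_lin_sqr_le : (w <= n)%N ->
  exists2 e, hweight e = w &
    bias_lin P e ^+ 2 <= (hball_vol n t)%:R / 2 ^+ k.+1 + eps / 2 + C * b ^+ t / 4.
Proof.
move=> wn; have [|e /eqP he eM] := exists_le_avg _ sum_fcoef_sqr_le.
  by rewrite sum1_hweight_eq ltr0n bin_gt0.
exists e => //; rewrite bias_linE // expr_div_n.
have -> : (hball_vol n t)%:R / 2 ^+ k.+1 + eps / 2 + C * b ^+ t / 4 = M / 2 ^+ 2.
  by rewrite /M exprS; field; rewrite expf_neq0.
by rewrite ler_pM2r ?invr_gt0 ?exprn_gt0.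
Qed.

End KrawtchoukAverage.

Lemma hball_ratio_le (R : realFieldType) k n (G : 'M['F_2]_(k, n)) t :
  (hball_vol n t)%:R / 2 ^+ k.+1 <=
  #|dual_code G|%:R * (hball_vol n t)%:R / 2 ^+ n.+1 :> R.
Proof.
have dual_ge : 2 ^+ n <= #|dual_code G|%:R * 2 ^+ k :> R.
  by rewrite -!natrX -natrM ler_nat card_dual_code_ge.
rewrite ler_pdivrMr ?exprn_gt0 // mulrAC ler_pdivlMr ?exprn_gt0 // !exprS.
have V0 : 0 <= (hball_vol n t)%:R :> R by [].
nra.
Qed.

Unset Implicit Arguments.

Theorem mainTheorem4 (R : realType) (c C : R)
  (hc0 : 0 < c) (hc1 : c < 1) (hC : 1 <= C)
  (hK : forall (n w i : nat), (1 <= n)%N -> w%:R <= c * n%:R -> (i * 2 <= n)%N ->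
     `|krawtchouk R n w i| <= C * 'C(n, w)%:R * (1 - 2 * w%:R / n%:R) ^+ i)
  (n k : nat) (G : 'M['F_2]_(k, n))
  (hk1 : (1 <= k)%N) (hkn : (k <= n - 1)%N) (hrank : \rank G = k)
  (w : nat) (hw : w%:R <= c * n%:R)
  (eps : R) (heps : 0 < eps)
  (P : 'cV['F_2]_n -> R) (hP : is_pmf P)
  (hTV : dTV_uniform G P <= eps) :
  let tp := ((dual_distance G).-1)./2 in
  exists e : 'cV['F_2]_n, hweight e = w /\
    `|bias_lin P e| <=
      Num.sqrt (#|dual_code G|%:R * (hball_vol n tp)%:R / 2 ^+ n.+1)
      + Num.sqrt (C * n%:R) / 2 * powR (1 - 2 * w%:R / n%:R) (tp%:R / 2)
      + Num.sqrt (eps / 2).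
Proof.
move=> t; have n2 : (2 <= n)%N by lia.
have C0 : 0 <= C by apply: le_trans hC.
have wn : (w <= n)%N.
  by rewrite -(ler_nat R); apply: le_trans hw _; rewrite ler_piMl // ltW.
have Cn_ge : C <= C * n%:R by rewrite ler_peMr // ler1n; lia.
set b := 1 - 2 * w%:R / n%:R.
(* For w > n/2, [powR] of the negative base is 1, and the trivial |bias| <= 1/2 suffices. *)
have [b_lt0 | b0] := ltrP b 0.
  have [e he] := exists_hweight wn; exists e; split => //.
  apply: le_trans (normr_bias_lin_le e hP) _; rewrite lt0_powR1 // mulr1.
  have : 1 <= Num.sqrt (C * n%:R).
    by rewrite -[X in X <= _](sqrtr1 R) ler_sqrt ?mulr_ge0 //; apply: le_trans hC Cn_ge.
  have := @sqrtr_ge0 R (eps / 2).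
  have := @sqrtr_ge0 R (#|dual_code G|%:R * (hball_vol n t)%:R / 2 ^+ n.+1).
  lra.
have b1 : b <= 1 by rewrite lerBlDr lerDl divr_ge0 ?mulr_ge0.
have hKb i : (i * 2 <= n)%N -> `|krawtchouk R n w i| <= C * 'C(n, w)%:R * b ^+ i.
  by move=> ?; apply: hK => //; lia.
have [e he bias_sqr] := exists_bias_lin_sqr_le t C0 b0 b1 hP hTV hKb wn.
exists e; split => //.
apply: normr_le_add3; rewrite ?mulr_ge0 ?divr_ge0 ?sqrtr_ge0 ?powR_ge0 //.
rewrite !sqr_sqrtr ?mulr_ge0 ?divr_ge0 ?invr_ge0 ?exprn_ge0 ?(ltW heps) //.
rewrite exprMn sqr_powR_half // expr_div_n sqr_sqrtr ?mulr_ge0 //.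
have Cbt : C * b ^+ t / 4 <= C * n%:R / 2 ^+ 2 * b ^+ t.
  rewrite expr2 -natrM [leRHS]mulrAC.
  by apply: ler_wpM2r; rewrite ?invr_ge0 //; apply: ler_wpM2r; rewrite ?exprn_ge0.
apply: le_trans bias_sqr _; rewrite [leRHS]addrAC; apply: lerD Cbt.
by rewrite lerD2r hball_ratio_le.
Qed.
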